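(* Consider Method 2.2 (described in the context) and suppose it does not terminate and the numbers $\varepsilon_k>0$ satisfy $\varepsilon_k\to0$. Then the sequences $\{x_k\},\{\sigma_k\}$ are defined for all $k\in K$ and $\lim_{k\to\infty}f(x_k)=f^*$, $\lim_{k\to\infty}\sigma_k=f^*$.
   Context: Setting: $D\subset\mathbb{R}^n$ closed convex; $f$ convex on $\mathbb{R}^n$ attaining its minimum $f^*$ on $D$; $X^*=\{x\in D:f(x)=f^*\}$; $K=\{0,1,\dots\}$; $\operatorname{epi}(f,\mathbb{R}^n)=\{(x,\gamma):\gamma\ge f(x)\}$; for $Q\subset\mathbb{R}^{n+1}$, $W^1(u,Q)=\{a\in\mathbb{R}^{n+1}:\|a\|=1,\ \langle a,z-u\rangle\le0\ \forall z\in Q\}$; $J=\{1,\dots,m\}$. Method 2.2: fix $x^*\in X^*$; choose $v^j\in\operatorname{int}\operatorname{epi}(f,\mathbb{R}^n)$ ($j\in J$), a closed convex bounded $G_0\subset D$ with $x^*\in G_0$, a closed convex $M_0\subset\mathbb{R}^{n+1}$ with $(x^*,f^* )\in M_0$, numbers $\varepsilon_0>0$, $\bar\gamma_0\le f^*$, a constant $q\ge1$; $i=k=0$. Step 1: $(y_i,\gamma_i)$ solves $\min\{\gamma: x\in G_i,\ (x,\gamma)\in M_i,\ \gamma\ge\bar\gamma_i\}$; if $f(y_i)=\gamma_i$ stop. Step 2: if $f(y_i)-\gamma_i>\varepsilon_k$, choose closed convex $Q_i\subset M_i$ with $(x^*,f^* )\in Q_i$, set $u_i=y_i$ and go to Step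 4. Step 3: choose closed convex $Q_i\ni(x^*,f^* )$; choose $x_k\in G_i$ with $f(x_k)\le f(y_i)$; set $i_k=i$, $\sigma_k=\gamma_{i_k}$, $u_i=x_k$; choose $\varepsilon_{k+1}>0$; $k\leftarrow k+1$. Step 4: for each $j\in J$ choose $z_i^j$ in the open segment $(v^j,(u_i,\gamma_i))$ with $z_i^j\notin\operatorname{int}\operatorname{epi}(f,\mathbb{R}^n)$ such that $(u_i,\gamma_i)+q_i^j(z_i^j-(u_i,\gamma_i))\in\operatorname{epi}(f,\mathbb{R}^n)$ for some $q_i^j\in[1,q]$. Step 5: for $j\in J$ choose nonempty finite $A_i^j\subset W^1(z_i^j,\operatorname{epi}(f,\mathbb{R}^n))$; $M_{i+1}=Q_i\cap\bigcap_{j\in J}\{w\in\mathbb{R}^{n+1}:\langle a,w-z_i^j\rangle\le0\ \forall a\in A_i^j\}$. Step 6: choose closed convex $G_{i+1}\subset G_0$ with $x^*\in G_{i+1}$ and $\bar\gamma_{i+1}\in[\bar\gamma_0,f^*]$; $i\leftarrow i+1$; go to Step 1. *)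

From HB Require Import structures.
From mathcomp Require Import all_boot all_order all_algebra.
From mathcomp Require Import all_classical all_reals all_analysis.
Set Implicit Arguments. Unset Strict Implicit. Unset Printing Implicit Defensive.
Import Order.TTheory GRing.Theory Num.Theory.
Import numFieldNormedType.Exports.
Local Open Scope classical_set_scope.
Local Open Scope ring_scope.

(* R^n is 'rV[R]_n ; R^{n+1} is represented as 'rV[R]_n * R, a point
   (x, gamma). *)
Section Defs.
Variables (R : realType) (n : nat).
Notation E := 'rV[R]_n.
Notation E1 := ('rV[R]_n * R)%type.

Definition dotE (u v : E) : R := (u *m v^T) 0 0.
Definition dotE1 (a b : E1) : R := dotE a.1 b.1 + a.2 * b.2.
Definition normE1 (a : E1) : R := Num.sqrt (dotE1 a a).

Definition addE1 (a b : E1) : E1 := (a.1 + b.1, a.2 + b.2).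
Definition subE1 (a b : E1) : E1 := (a.1 - b.1, a.2 - b.2).
Definition scaleE1 (t : R) (a : E1) : E1 := (t *: a.1, t * a.2).

Definition convex_setE (A : set E) : Prop :=
  forall x y t, A x -> A y -> 0 <= t <= 1 -> A (t *: x + (1 - t) *: y).
Definition convex_setE1 (A : set E1) : Prop :=
  forall p q t, A p -> A q -> 0 <= t <= 1 ->
    A (addE1 (scaleE1 t p) (scaleE1 (1 - t) q)).
Definition convex_funE (f : E -> R) : Prop :=
  forall x y t, 0 <= t <= 1 ->
    f (t *: x + (1 - t) *: y) <= t * f x + (1 - t) * f y.
Definition bounded_setE (A : set E) : Prop :=
  exists r : R, forall x, A x -> Num.sqrt (dotE x x) <= r.

Definition epi (f : E -> R) : set E1 := [set p | f p.1 <= p.2].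

Definition W1 (u : E1) (Q : set E1) : set E1 :=
  [set a | normE1 a = 1 /\ forall z, Q z -> dotE1 a (subE1 z u) <= 0].

Definition open_segment (v w : E1) : set E1 :=
  [set p | exists t : R, 0 < t < 1 /\ p = addE1 v (scaleE1 t (subE1 w v))].

Definition cut (A : seq E1) (z : E1) : set E1 :=
  [set w | forall a, a \in A -> dotE1 a (subE1 w z) <= 0].

End Defs.

(* A complete infinite run of Method 2.2 that never stops at Step 1.
   Iterations are indexed by i : nat; kk i is the value of the counter k
   when iteration i reaches Step 2.  Iteration i performs Step 3 exactly
   when step3 i holds, i.e. when f(y_i) - gamma_i <= eps_(kk i). *)
Definition method22_run (R : realType) (n m : nat)
  (D : set 'rV[R]_n) (f : 'rV[R]_n -> R) (fstar : R) (xstar : 'rV[R]_n)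
  (v : 'I_m -> ('rV[R]_n * R)) (q : R)
  (G : nat -> set 'rV[R]_n) (M Q : nat -> set ('rV[R]_n * R))
  (bgam : nat -> R) (y : nat -> 'rV[R]_n) (gam : nat -> R)
  (eps : nat -> R) (kk : nat -> nat)
  (x : nat -> 'rV[R]_n) (ik : nat -> nat) (sigma : nat -> R)
  (u : nat -> 'rV[R]_n) (z : nat -> 'I_m -> ('rV[R]_n * R))
  (A : nat -> 'I_m -> seq ('rV[R]_n * R)) : Prop :=
  let step3 i := f (y i) - gam i <= eps (kk i) in
  ((forall j, interior (epi f) (v j)) /\
   (closed (G 0) /\ convex_setE (G 0) /\ bounded_setE (G 0) /\
        G 0 `<=` D /\ G 0 xstar) /\
   (closed (M 0) /\ convex_setE1 (M 0) /\ M 0 (xstar, fstar)) /\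
   bgam 0 <= fstar /\ 1 <= q /\ kk 0 = 0%N)
  /\ forall i : nat,
  (
     (G i (y i) /\ M i (y i, gam i) /\ bgam i <= gam i /\
        (forall x' g', G i x' -> M i (x', g') -> bgam i <= g' -> gam i <= g')) /\
     (closed (Q i) /\ convex_setE1 (Q i) /\ Q i (xstar, fstar)) /\
      (~ step3 i ->
         Q i `<=` M i /\ u i = y i /\ kk i.+1 = kk i) /\
      (step3 i ->
         G i (x (kk i)) /\ f (x (kk i)) <= f (y i) /\ ik (kk i) = i /\
         sigma (kk i) = gam i /\ u i = x (kk i) /\ kk i.+1 = (kk i).+1) /\
      (forall j, open_segment (v j) (u i, gam i) (z i j) /\
         ~ interior (epi f) (z i j) /\
         exists qij : R, 1 <= qij <= q /\
           epi f (addE1 (u i, gam i) (scaleE1 qij (subE1 (z i j) (u i, gam i))))) /\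
      (forall j, A i j != [::] /\ (forall a, a \in A i j -> W1 (z i j) (epi f) a)) /\
        (M i.+1 = Q i `&` [set w | forall j, cut (A i j) (z i j) w]) /\
      closed (G i.+1) /\ convex_setE (G i.+1) /\ G i.+1 `<=` G 0 /\
        G i.+1 xstar /\ bgam 0 <= bgam i.+1 <= fstar).

From Pilot Require Import Defs.
From HB Require Import structures.
From mathcomp Require Import all_boot all_order all_algebra.
From mathcomp Require Import all_classical all_reals all_analysis.
From mathcomp Require Import ring lra.
Import Order.TTheory GRing.Theory Num.Theory.
Import numFieldNormedType.Exports.
Local Open Scope classical_set_scope.
Local Open Scope ring_scope.
Set Implicit Arguments. Unset Strict Implicit.

(* If Step 3 were executed only finitely often, then from some iteration i0 on
   the counter k and hence eps_k =: eps would be frozen, every (y_i, gamma_i)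
   would lie more than eps below the graph of f, and the sets M_i would
   decrease.  The cut of such an iteration i is made with a unit normal a at the
   point z_i of the segment from an interior point v of epi f to (y_i, gamma_i).
   Since f is bounded above near v.1, convexity bounds it above near any point c,
   so the step q_i from (y_i, gamma_i) through z_i, which ends in epi f, cannot be
   short: z_i stays a definite fraction away from (y_i, gamma_i).  As v is
   interior, <a, v - z_i> is bounded away from 0, and every later iterate, lying
   in M_j within the cut, satisfies <a, (y_i, gamma_i) - (y_j, gamma_j)> >= kappa,
   with kappa uniform for y_i near c.  Taking for c a cluster point of the
   bounded sequence (y_i, gamma_i) gives a contradiction.  Hence Step 3 occurs
   for every k, and at that iteration
   f* <= f(x_k) <= f(y_i) <= gamma_i + eps_k <= f* + eps_k and
   f* - eps_k <= sigma_k = gamma_i <= f*. *)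

Section InnerProduct.
Variables (R : realType) (n : nat).
Implicit Types (u w : 'rV[R]_n) (a p r : 'rV[R]_n * R).

Lemma dotE_sum u w : dotE u w = \sum_k u 0 k * w 0 k.
Proof. by rewrite /dotE mxE; apply: eq_bigr => k _; rewrite mxE. Qed.

Lemma dotED u w1 w2 : dotE u (w1 + w2) = dotE u w1 + dotE u w2.
Proof. by rewrite !dotE_sum -big_split; apply: eq_bigr => k _; rewrite !mxE mulrDr. Qed.

Lemma dotEB u w1 w2 : dotE u (w1 - w2) = dotE u w1 - dotE u w2.
Proof. by rewrite !dotE_sum -sumrB; apply: eq_bigr => k _; rewrite !mxE mulrBr. Qed.

Lemma dotEZ u c w : dotE u (c *: w) = c * dotE u w.
Proof. by rewrite !dotE_sum mulr_sumr; apply: eq_bigr => k _; rewrite !mxE mulrCA. Qed.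

Lemma dotE1D a p r : dotE1 a (addE1 p r) = dotE1 a p + dotE1 a r.
Proof. by rewrite /dotE1 /= dotED; ring. Qed.

Lemma dotE1B a p r : dotE1 a (subE1 p r) = dotE1 a p - dotE1 a r.
Proof. by rewrite /dotE1 /= dotEB; ring. Qed.

Lemma dotE1Z a c p : dotE1 a (scaleE1 c p) = c * dotE1 a p.
Proof. by rewrite /dotE1 /= dotEZ; ring. Qed.

Lemma sqr_entry_le_dotE u k : u 0 k ^+ 2 <= dotE u u.
Proof.
rewrite dotE_sum (bigD1 k) //= -expr2 lerDl.
by apply: sumr_ge0 => j _; rewrite -expr2 sqr_ge0.
Qed.

Lemma dotE_ge0 u : 0 <= dotE u u.
Proof. by rewrite dotE_sum; apply: sumr_ge0 => k _; rewrite -expr2 sqr_ge0. Qed.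

Lemma normE1_eq1 a : normE1 a = 1 -> dotE1 a a = 1.
Proof.
have a_ge0 : 0 <= dotE1 a a by rewrite addr_ge0 ?dotE_ge0 // -expr2 sqr_ge0.
by rewrite /normE1 => a1; rewrite -(sqr_sqrtr a_ge0) a1 expr1n.
Qed.

Lemma unit_entries_le1 a :
  dotE1 a a = 1 -> (forall k, `|a.1 0 k| <= 1) /\ `|a.2| <= 1.
Proof.
rewrite /dotE1 => a1.
have a2_ge0 : 0 <= a.2 * a.2 by rewrite -expr2 sqr_ge0.
have := dotE_ge0 a.1; split; last by rewrite ler_norml; apply/andP; split; nra.
move=> k; have := sqr_entry_le_dotE a.1 k; rewrite expr2 => ak.
by rewrite ler_norml; apply/andP; split; nra.
Qed.

Lemma entry_le_norm u k : `|u 0 k| <= `|u|.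
Proof.
by rewrite [`|u|]mx_normrE; apply/bigmax_geP; right; exists (0, k).
Qed.

Lemma norm_le_entries u c : 0 <= c -> (forall k, `|u 0 k| <= c) -> `|u| <= c.
Proof.
move=> c_ge0 uc; rewrite [`|u|]mx_normrE.
by apply/bigmax_leP; split => // -[i k] _ /=; rewrite (ord1 i).
Qed.

Lemma norm_le_sqrt_dotE u : `|u| <= Num.sqrt (dotE u u).
Proof.
apply: norm_le_entries => [|k]; first exact: sqrtr_ge0.
by rewrite -sqrtr_sqr ler_sqrt ?sqr_entry_le_dotE ?dotE_ge0.
Qed.

Lemma dotE_le u w : (forall k, `|u 0 k| <= 1) -> dotE u w <= n%:R * `|w|.
Proof.
move=> u1; apply: le_trans (ler_norm _) _; rewrite dotE_sum.
apply: le_trans (ler_norm_sum _ _ _) _.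
have -> : n%:R * `|w| = \sum_(k < n) `|w| by rewrite sumr_const card_ord mulr_natl.
apply: ler_sum => k _; rewrite normrM -[X in _ <= X]mul1r.
by apply: ler_pM; rewrite ?normr_ge0 ?u1 ?entry_le_norm.
Qed.

Lemma dotE1_unit_le a d : dotE1 a a = 1 -> dotE1 a d <= n%:R * `|d.1| + `|d.2|.
Proof.
move=> /unit_entries_le1 [a1 a2]; rewrite /dotE1 lerD ?dotE_le //.
apply: le_trans (ler_norm _) _; rewrite normrM -[X in _ <= X]mul1r.
by apply: ler_pM.
Qed.

Lemma bounded_setE_bounded (S : set 'rV[R]_n) : bounded_setE S -> bounded_set S.
Proof.
move=> [r Sr]; exists r; split; first exact: num_real.
move=> b rb w Sw /=; apply: le_trans (norm_le_sqrt_dotE w) _.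
exact: le_trans (Sr w Sw) (ltW rb).
Qed.

End InnerProduct.

Section Convexity.
Variables (R : realType) (n : nat) (f : 'rV[R]_n -> R).
Hypothesis f_convex : convex_funE f.

Lemma convex_bounded_above_near (c ys : 'rV[R]_n) (b e : R) :
  (forall w, `|c - w| < e -> f w <= b) ->
  exists U, forall w, `|ys - w| < e / 2 -> f w <= U.
Proof.
move=> fb; exists ((f (2%:R *: ys - c) + b) / 2%:R) => w ysw.
have half01 : 0 <= (2^-1 : R) <= 1 by apply/andP; split; lra.
(* [w] is the midpoint of the reflection of [c] through [ys] and a point near [c]. *)
have -> : w = 2^-1 *: (2%:R *: ys - c) + (1 - 2^-1) *: (2%:R *: (w - ys) + c).
  by apply/rowP => k; rewrite !mxE; field.
apply: le_trans (f_convex _ _ half01) _.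
suff : f (2%:R *: (w - ys) + c) <= b by lra.
apply: fb; rewrite opprD addrCA subrr addr0 normrN normrZ distrC ger0_norm //.
lra.
Qed.

Lemma convex_three_points (p d : 'rV[R]_n) (s h : R) : 0 <= s -> 0 < h ->
  f p * (s + h) <= h * f (p + s *: d) + s * f (p - h *: d).
Proof.
move=> s_ge0 h_gt0; have sh_gt0 : 0 < s + h by lra.
set t := h / (s + h).
have t01 : 0 <= t <= 1 by rewrite divr_ge0 ?ler_pdivrMr ?mul1r /=; lra.
have ht : t * (s + h) = h by rewrite /t divfK //; lra.
have ht' : (1 - t) * (s + h) = s by rewrite mulrBl ht mul1r addrK.
have := f_convex (p + s *: d) (p - h *: d) t01.
have -> : t *: (p + s *: d) + (1 - t) *: (p - h *: d) = p.
  by apply/rowP => k; rewrite !mxE /t; field; lra.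
move=> /(ler_wpM2r (ltW sh_gt0)) /le_trans; apply.
by rewrite mulrDl -!mulrA ![_ * (s + h)]mulrC !mulrA ht ht'.
Qed.

Lemma convex_step_lower_bound (c v1 : 'rV[R]_n) (v2 g0 fs rho U : R) :
  0 < rho -> (forall w, `|c - w| < rho -> f w <= U) ->
  exists2 kappa, 0 < kappa & forall p g s ep,
    `|c - p| < rho / 2 -> 0 <= s -> g0 <= g -> fs <= f p -> g + ep < f p ->
    f (p + s *: (v1 - p)) <= g + s * (v2 - g) -> kappa * ep < s.
Proof.
move=> rho_gt0 fU.
have vc_ge0 := normr_ge0 (v1 - c).
set h := rho / (2 * (`|v1 - c| + rho + 1)).
have h_gt0 : 0 < h by rewrite divr_gt0 //; lra.
have hB : h * (`|v1 - c| + rho + 1) = rho / 2 by rewrite /h; field; lra.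
set C := h * `|v2 - g0| + `|U - fs| + 1.
have C_gt0 : 0 < C.
  by rewrite /C; have := normr_ge0 (v2 - g0); have := normr_ge0 (U - fs); nra.
exists (h / C) => [|p g s ep cp s_ge0 g0g fsp gp fstep]; first exact: divr_gt0.
rewrite mulrAC ltr_pdivrMr //.
(* Stepping back from [p] by [h] keeps us in the ball where [f <= U]. *)
have fback : f (p - h *: (v1 - p)) <= U.
  apply: fU; rewrite opprB addrCA addrC.
  apply: le_lt_trans (ler_normD _ _) _; rewrite normrZ gtr0_norm //.
  have := ler_distD c v1 p.
  nra.
have := convex_three_points p (v1 - p) s_ge0 h_gt0.
have := ler_wpM2l (ltW h_gt0) fstep; have := ler_wpM2l s_ge0 fback.
have : h * ep < h * (f p - g) by rewrite ltr_pM2l //; lra.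
have : s * (h * (v2 - g) + U - f p) <= s * (C - 1).
  apply: ler_wpM2l => //; rewrite /C.
  have : v2 - g <= `|v2 - g0| by apply: le_trans (ler_norm _); lra.
  have : U - f p <= `|U - fs| by apply: le_trans (ler_norm _); lra.
  nra.
nra.
Qed.

End Convexity.

Section Halfspaces.
Variables (R : realType) (n : nat).
Implicit Types (a p v w z : 'rV[R]_n * R).

Lemma segment_rescale p v t s :
  addE1 p (scaleE1 s (subE1 (addE1 v (scaleE1 t (subE1 p v))) p)) =
  addE1 p (scaleE1 (s * (1 - t)) (subE1 v p)).
Proof. by congr pair => /=; [apply/rowP => k; rewrite !mxE|]; ring. Qed.

Lemma W1_interior_gap (S : set ('rV[R]_n * R)) v e z a :
  0 < e -> ball v e `<=` S -> W1 z S a -> dotE1 a (subE1 v z) <= - (e / 2).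
Proof.
move=> e_gt0 vS [/normE1_eq1 a1 aS].
have [a1_le1 a2_le1] := unit_entries_le1 a1.
have step_lt : forall r, 0 <= r <= 1 -> `|e / 2| * r < e.
  by move=> r /andP[r0 r1]; rewrite gtr0_norm ?divr_gt0 //; nra.
suff : dotE1 a (subE1 (addE1 v (scaleE1 (e / 2) a)) z) <= 0.
  by rewrite !dotE1B dotE1D dotE1Z a1; lra.
apply/aS/vS; split => /=; rewrite -ball_normE /= opprD addNKr normrN.
  by rewrite normrZ step_lt // normr_ge0 norm_le_entries.
by rewrite normrM step_lt // normr_ge0.
Qed.

Lemma cut_lower_bound a v p w z t c :
  0 < t <= 1 -> 0 <= c -> z = addE1 v (scaleE1 t (subE1 p v)) ->
  dotE1 a (subE1 v z) <= - c -> dotE1 a (subE1 w z) <= 0 ->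
  (1 - t) * c <= dotE1 a (subE1 p w).
Proof.
move=> /andP[t_gt0 t_le1] c_ge0 ->.
rewrite !dotE1B dotE1D dotE1Z dotE1B.
set P := dotE1 a p; set V := dotE1 a v; set W := dotE1 a w => tc zw.
have PV_ge_c : c <= P - V.
  have PV_ge0 : 0 <= P - V by rewrite -(pmulr_rge0 _ t_gt0); lra.
  by apply: le_trans (_ : t * (P - V) <= _); [lra | rewrite ler_piMl].
have : (1 - t) * c <= (1 - t) * (P - V) by rewrite ler_wpM2l // subr_ge0.
lra.
Qed.

End Halfspaces.

Lemma compact_seq_cluster (R : realType) (T : pseudoMetricType R) (S : set T)
    (p : nat -> T) :
  compact S -> (forall i, S (p i)) ->
  exists2 c, S c & forall N e, 0 < e -> exists2 i, (N <= i)%N & ball c e (p i).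
Proof.
move=> S_compact Sp.
have [|c [Sc c_cluster]] := S_compact (p @ \oo) _ _.
  by exists 0%N => // i _; exact: Sp.
exists c => // N e e_gt0.
have [//|i [[j Nj <-] cj]] := c_cluster (p @` [set j | (N <= j)%N]) (ball c e) _
  (nbhsx_ballx _ _ e_gt0); last by exists j.
by exists N => // j /= Nj; exists j.
Qed.

Section Run.
Variables (R : realType) (n m : nat) (D : set 'rV[R]_n) (f : 'rV[R]_n -> R)
  (fstar : R) (xstar : 'rV[R]_n) (v : 'I_m -> 'rV[R]_n * R) (q : R)
  (G : nat -> set 'rV[R]_n) (M Q : nat -> set ('rV[R]_n * R))
  (bgam : nat -> R) (y : nat -> 'rV[R]_n) (gam : nat -> R)
  (eps : nat -> R) (kk : nat -> nat)
  (x : nat -> 'rV[R]_n) (ik : nat -> nat) (sigma : nat -> R)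
  (u : nat -> 'rV[R]_n) (z : nat -> 'I_m -> 'rV[R]_n * R)
  (A : nat -> 'I_m -> seq ('rV[R]_n * R)).
Hypothesis run :
  method22_run D f fstar xstar v q G M Q bgam y gam eps kk x ik sigma u z A.
Hypothesis f_convex : convex_funE f.
Hypothesis fstar_min : forall x', D x' -> fstar <= f x'.
Hypothesis f_xstar : f xstar = fstar.
Hypothesis eps_gt0 : forall k, 0 < eps k.
Hypothesis m_gt0 : (0 < m)%N.

Let step3 i := f (y i) - gam i <= eps (kk i).

Lemma v_interior j : interior (epi f) (v j).
Proof. by case: run => -[]. Qed.

Lemma G0_closed : closed (G 0).
Proof. by case: run => -[_ [[]]]. Qed.

Lemma G0_xstar : G 0 xstar.
Proof. by case: run => -[_ [[_ [_ [_ [_ ?]]]] _]]. Qed.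

Lemma M0_xstar : M 0 (xstar, fstar).
Proof. by case: run => -[_ [_ [[_ [_ ?]] _]]]. Qed.

Lemma G0_bounded : bounded_setE (G 0).
Proof. by case: run => -[_ [[_ [_ []]]]]. Qed.

Lemma G0_sub_D : G 0 `<=` D.
Proof. by case: run => -[_ [[_ [_ [_ []]]]]]. Qed.

Lemma bgam0_le_fstar : bgam 0 <= fstar.
Proof. by case: run => -[_ [_ [_ []]]]. Qed.

Lemma q_ge1 : 1 <= q.
Proof. by case: run => -[_ [_ [_ [_ []]]]]. Qed.

Lemma kk0 : kk 0 = 0%N.
Proof. by case: run => -[_ [_ [_ [_ [_ ->]]]]]. Qed.

Lemma step1_feasible i : [/\ G i (y i), M i (y i, gam i) & bgam i <= gam i].
Proof. by case: run => _ /(_ i) [[? [? [? _]]] _]. Qed.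

Lemma step1_optimal i x' g' :
  G i x' -> M i (x', g') -> bgam i <= g' -> gam i <= g'.
Proof. by case: run => _ /(_ i) [[_ [_ [_ opt]]] _]; apply: opt. Qed.

Lemma Q_xstar i : Q i (xstar, fstar).
Proof. by case: run => _ /(_ i) [_ [[_ [_ ?]] _]]. Qed.

Lemma step2P i : ~ step3 i -> [/\ Q i `<=` M i, u i = y i & kk i.+1 = kk i].
Proof. by move=> ns; case: run => _ /(_ i) [_ [_ [/(_ ns) [? [? ?]] _]]]. Qed.

Lemma step3P i : step3 i ->
  [/\ G i (x (kk i)), f (x (kk i)) <= f (y i), sigma (kk i) = gam i
    & kk i.+1 = (kk i).+1].
Proof.
by move=> s3; case: run => _ /(_ i) [_ [_ [_ [/(_ s3) [? [? [_ [? [_ ?]]]]] _]]]].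
Qed.

Lemma step4P i j :
  open_segment (v j) (u i, gam i) (z i j) /\
  exists2 s, 1 <= s <= q &
    epi f (addE1 (u i, gam i) (scaleE1 s (subE1 (z i j) (u i, gam i)))).
Proof.
case: run => _ /(_ i) [_ [_ [_ [_ [/(_ j) [? [_ [s [? ?]]]] _]]]]].
by split => //; exists s.
Qed.

Lemma step5P i j : A i j != [::] /\ (forall a, a \in A i j -> W1 (z i j) (epi f) a).
Proof. by case: run => _ /(_ i) [_ [_ [_ [_ [_ [/(_ j) ? _]]]]]]. Qed.

Lemma M_succ i : M i.+1 = Q i `&` [set w | forall j, Defs.cut (A i j) (z i j) w].
Proof. by case: run => _ /(_ i) [_ [_ [_ [_ [_ [_ [? _]]]]]]]. Qed.

Lemma step6P i : [/\ G i.+1 `<=` G 0, G i.+1 xstar & bgam 0 <= bgam i.+1 <= fstar].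
Proof. by case: run => _ /(_ i) [_ [_ [_ [_ [_ [_ [_ [_ [_ [? [? ?]]]]]]]]]]]. Qed.

Lemma G_sub_G0 i : G i `<=` G 0.
Proof. by case: i => [//|i]; case: (step6P i). Qed.

Lemma xstar_in_G i : G i xstar.
Proof. by case: i => [|i]; [exact: G0_xstar | case: (step6P i)]. Qed.

Lemma bgam_bounds i : bgam 0 <= bgam i <= fstar.
Proof. by case: i => [|i]; [rewrite lexx bgam0_le_fstar | case: (step6P i)]. Qed.

Lemma xstar_in_M i : M i (xstar, fstar).
Proof.
case: i => [|i]; first exact: M0_xstar.
rewrite M_succ; split => [|j a aA]; first exact: Q_xstar.
by apply: ((step5P i j).2 a aA).2; rewrite /epi /= f_xstar.
Qed.

Lemma gam_le_fstar i : gam i <= fstar.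
Proof.
apply: step1_optimal; [exact: xstar_in_G | exact: xstar_in_M |].
by case/andP: (bgam_bounds i).
Qed.

Lemma bgam0_le_gam i : bgam 0 <= gam i.
Proof.
case: (step1_feasible i) => _ _; apply: le_trans.
by case/andP: (bgam_bounds i).
Qed.

Lemma fstar_le_f_y i : fstar <= f (y i).
Proof. by case: (step1_feasible i) => /G_sub_G0/G0_sub_D/fstar_min. Qed.

Lemma kk_stagnant i j :
  (i <= j)%N -> (forall l, (i <= l < j)%N -> ~ step3 l) -> kk j = kk i.
Proof.
elim: j => [|j IH]; first by rewrite leqn0 => /eqP ->.
rewrite leq_eqVlt ltnS => /orP[/eqP -> //|ij] stag.
have /step2P[_ _ ->] : ~ step3 j by apply: stag; rewrite ij ltnSn.
by apply: IH => // l /andP[il lj]; apply: stag; rewrite il ltnS ltnW.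
Qed.

Lemma M_stagnant i j :
  (i <= j)%N -> (forall l, (i <= l < j)%N -> ~ step3 l) -> M j `<=` M i.
Proof.
elim: j => [|j IH]; first by rewrite leqn0 => /eqP -> _.
rewrite leq_eqVlt ltnS => /orP[/eqP -> _ //|ij] stag.
have /step2P[QM _ _] : ~ step3 j by apply: stag; rewrite ij ltnSn.
rewrite M_succ => w [/QM Mw _]; apply: IH Mw => // l /andP[il lj].
by apply: stag; rewrite il ltnS ltnW.
Qed.

Lemma nonstep3_cut i j : ~ step3 i ->
  exists t s a, [/\ 0 < t < 1 /\
    z i j = addE1 (v j) (scaleE1 t (subE1 (y i, gam i) (v j))),
    0 <= s <= q * (1 - t),
    f (y i + s *: ((v j).1 - y i)) <= gam i + s * ((v j).2 - gam i),
    W1 (z i j) (epi f) a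
    & M i.+1 `<=` [set w | dotE1 a (subE1 w (z i j)) <= 0]].
Proof.
move=> /step2P[_ ui _]; have [[t [t01 zt]] [s /andP[s_ge1 s_le_q] fs]] := step4P i j.
rewrite ui in zt fs; rewrite zt segment_rescale in fs.
have [+ aW] := step5P i j; case Aij: (A i j) => [//|a rest] _.
have aA : a \in A i j by rewrite Aij mem_head.
case/andP: t01 => t_gt0 t_lt1.
exists t, (s * (1 - t)), a; split => //; first by rewrite t_gt0 t_lt1.
- by rewrite mulr_ge0 ?ler_wpM2r ?subr_ge0 ?(ltW t_lt1) //; lra.
- exact: aW.
- by rewrite M_succ => w [_ /(_ j) /(_ a aA)].
Qed.

Lemma stagnation_separation i0 (c : 'rV[R]_n) :
  (forall i, (i0 <= i)%N -> ~ step3 i) ->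
  exists2 rho, 0 < rho & exists2 kappa, 0 < kappa &
    forall i j, (i0 <= i < j)%N -> `|c - y i| < rho ->
      kappa <= n%:R * `|y i - y j| + `|gam i - gam j|.
Proof.
move=> stag; pose j0 := Ordinal m_gt0; set vj := v j0.
have [e e_gt0 ball_epi] : nbhs_ball vj (epi f) by apply/nbhs_ballP/v_interior.
have f_le_vj : forall w, `|vj.1 - w| < e -> f w <= vj.2.
  move=> w vw; apply: (ball_epi (w, vj.2)).
  by split; rewrite /= -ball_normE //= subrr normr0.
have [U fU] := convex_bounded_above_near f_convex c f_le_vj.
have e2_gt0 : 0 < e / 2 by rewrite divr_gt0.
have [kappa kappa_gt0 step_lb] :=
  convex_step_lower_bound f_convex vj.1 vj.2 (bgam 0) fstar e2_gt0 fU.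
have q_gt0 : 0 < q by have := q_ge1; lra.
set ep := eps (kk i0); have ep_gt0 : 0 < ep := eps_gt0 _.
exists (e / 2 / 2); first by rewrite divr_gt0.
exists (kappa * ep * (e / 2) / q); first by rewrite !divr_gt0 ?mulr_gt0.
move=> i j /andP[i0i ij] ci; have nsi := stag i i0i.
have [t [s [a [[/andP[t_gt0 t_lt1] zt] /andP[s_ge0 s_le] fstep aW Mcut]]]] :=
  nonstep3_cut j0 nsi.
have above : gam i + ep < f (y i).
  move/negP: nsi; rewrite -ltNge /ep -(kk_stagnant i0i) => [|l /andP[i0l _]].
    by rewrite ltrBrDl addrC.
  exact: stag.
have kappa_le_s : kappa * ep < s.
  exact: step_lb ci s_ge0 (bgam0_le_gam i) (fstar_le_f_y i) above fstep.
have v_below := W1_interior_gap e_gt0 ball_epi aW.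
have yj_cut : dotE1 a (subE1 (y j, gam j) (z i j0)) <= 0.
  apply/Mcut/(M_stagnant ij) => [l /andP[il _]|]; last by case: (step1_feasible j).
  by apply: stag; rewrite (leq_trans i0i) // ltnW.
have t01 : 0 < t <= 1 by rewrite t_gt0 ltW.
have lb := cut_lower_bound t01 (ltW e2_gt0) zt v_below yj_cut.
have [/normE1_eq1 a1 _] := aW.
apply: le_trans (dotE1_unit_le (subE1 (y i, gam i) (y j, gam j)) a1).
apply: le_trans lb.
by rewrite mulrAC ler_pM2r // ler_pdivrMr //; lra.
Qed.

Lemma step3_infinitely_often i0 : exists i, (i0 <= i)%N && step3 i.
Proof.
apply: contrapT => no_step3.
have stag : forall i, (i0 <= i)%N -> ~ step3 i.
  by move=> i i0i s3; apply: no_step3; exists i; rewrite i0i.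
have S_compact : compact (G 0 `*` `[bgam 0, fstar]).
  apply: compact_setX; last exact: segment_compact.
  exact: bounded_closed_compact (bounded_setE_bounded G0_bounded) G0_closed.
have S_iterates i : (G 0 `*` `[bgam 0, fstar]) (y i, gam i).
  split; first by case: (step1_feasible i) => /G_sub_G0.
  by rewrite /= in_itv /= bgam0_le_gam gam_le_fstar.
have [c _ c_cluster] := compact_seq_cluster S_compact S_iterates.
have [rho rho_gt0 [kappa kappa_gt0 sep]] := stagnation_separation c.1 stag.
pose eta := Num.min rho (kappa / (2 * (n%:R + 1))).
have eta_gt0 : 0 < eta by rewrite lt_min rho_gt0 !divr_gt0 ?mulr_gt0 ?ltr_wpDl.
have [i i0i [/= ci gi]] := c_cluster i0 _ eta_gt0.
have [j ij [/= cj gj]] := c_cluster i.+1 _ eta_gt0.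
rewrite -ball_normE /= in ci cj; rewrite -ball_normE /= in gi gj.
have i0ij : (i0 <= i < j)%N by rewrite i0i.
have eta_le_rho : eta <= rho by rewrite ge_min lexx.
have : eta * (2 * (n%:R + 1)) <= kappa by rewrite -ler_pdivlMr ?ge_min ?lexx ?orbT.
have := sep i j i0ij (lt_le_trans ci eta_le_rho).
have := ler_distD c.1 (y i) (y j); have := ler_distD c.2 (gam i) (gam j).
rewrite ![`|_ - c.1|]distrC ![`|_ - c.2|]distrC => dg dy.
have : n%:R * `|y i - y j| <= n%:R * (eta + eta) by rewrite ler_wpM2l //; lra.
nra.
Qed.

Lemma step3_at_level i : exists j, kk j = kk i /\ step3 j.
Proof.
case: (ex_minnP (step3_infinitely_often i)) => j /andP[ij s3] first_j.
exists j; split => //; apply: kk_stagnant => // l /andP[il lj] s3l.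
by have := first_j l; rewrite il s3l leqNgt lj => /(_ isT).
Qed.

Lemma step3_every_level k : exists i, kk i = k /\ step3 i.
Proof.
elim: k => [|k [i [<- s3]]]; first by rewrite -kk0; apply: step3_at_level.
have [_ _ _ kk_succ] := step3P s3.
by rewrite -kk_succ; apply: step3_at_level.
Qed.

Lemma eps_bounds k : `|f (x k) - fstar| <= eps k /\ `|sigma k - fstar| <= eps k.
Proof.
have [i [<- s3]] := step3_every_level k.
have [/G_sub_G0/G0_sub_D/fstar_min fx_ge fx_le -> _] := step3P s3.
have := gam_le_fstar i; have := fstar_le_f_y i; move: s3; rewrite /step3 => s3.
by rewrite !ler_distl; lra.
Qed.

End Run.

Lemma cvg_dist_le (R : realType) (a e : nat -> R) (l : R) :
  (forall k, `|a k - l| <= e k) -> e @ \oo --> 0 -> a @ \oo --> l.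
Proof.
move=> ae e_to0.
apply: (@squeeze_cvgr _ _ _ _ (fun k => l - e k) (fun k => l + e k)).
- by apply: nearW => k; rewrite -ler_distlC distrC.
- by rewrite -[X in _ --> X]subr0; apply: cvgB => //; exact: cvg_cst.
- by rewrite -[X in _ --> X]addr0; apply: cvgD => //; exact: cvg_cst.
Qed.

Unset Implicit Arguments. Set Strict Implicit.

Theorem theorem2p2p3 (R : realType) (n m : nat)
  (D : set 'rV[R]_n) (f : 'rV[R]_n -> R) (fstar : R) (xstar : 'rV[R]_n)
  (v : 'I_m -> ('rV[R]_n * R)) (q : R)
  (G : nat -> set 'rV[R]_n) (M Q : nat -> set ('rV[R]_n * R))
  (bgam : nat -> R) (y : nat -> 'rV[R]_n) (gam : nat -> R)
  (eps : nat -> R) (kk : nat -> nat)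
  (x : nat -> 'rV[R]_n) (ik : nat -> nat) (sigma : nat -> R)
  (u : nat -> 'rV[R]_n) (z : nat -> 'I_m -> ('rV[R]_n * R))
  (A : nat -> 'I_m -> seq ('rV[R]_n * R)) :
  (0 < m)%N ->
  closed D -> convex_setE D -> convex_funE f ->
  (* f attains its minimum f* on D, and x* in X* *)
  D xstar -> f xstar = fstar -> (forall x', D x' -> fstar <= f x') ->
  method22_run D f fstar xstar v q G M Q bgam y gam eps kk x ik sigma u z A ->
  (* the method does not terminate *)
  (forall i, f (y i) != gam i) ->
  (* eps_k > 0, eps_k -> 0 *)
  (forall k, 0 < eps k) -> eps @ \oo --> 0 ->
  (* conclusion: x_k, sigma_k defined for all k, and the limits *)
  (forall k : nat, exists i : nat,
      kk i = k /\ f (y i) - gam i <= eps (kk i)) /\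
  (fun k => f (x k)) @ \oo --> fstar /\
  sigma @ \oo --> fstar.
Proof.
move=> m_gt0 _ _ f_convex _ f_xstar fstar_min run _ eps_gt0 eps_to0.
split; first exact: step3_every_level run f_convex fstar_min f_xstar eps_gt0 m_gt0.
have bounds := eps_bounds run f_convex fstar_min f_xstar eps_gt0 m_gt0.
by split; apply: cvg_dist_le eps_to0 => k; case: (bounds k).
Qed.
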